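(* There exists $C(\tau_0)\in(0,\infty)$ such that for all $\tau\in(0,\tau_0)$ and all $x_1,x_2,x\in\mathbb R^2$: (1) $\langle x_2-x_1,\psi_\tau(x_2)-\psi_\tau(x_1)\rangle\le C(\tau_0)\|x_2-x_1\|^2$; (2) $\|\psi_\tau(x_2)-\psi_\tau(x_1)\|\le C(\tau_0)(1+\|x_1\|^3+\|x_2\|^3)\|x_2-x_1\|$; (3) $\|\psi_\tau(x)-F(x)\|\le C(\tau_0)\,\tau\,(1+\|x\|^5)$. Moreover $\sup_{\tau\in(0,\tau_0)}\|\psi_\tau(0)\|<\infty$.
   Context: $\langle\cdot,\cdot\rangle$, $\|\cdot\|$ are the Euclidean inner product and norm on $\mathbb R^2$. Fix real $\gamma_1,\gamma_2,\beta$, $B=\begin{pmatrix}0&-1\\ \gamma_1&-\gamma_2\end{pmatrix}$ and $F(u,v)=(u-u^3-v,\ \gamma_1u-\gamma_2v+\beta)$. For $t\ge0$, $\phi^{\rm NL}_t(u,v)=\big(u/\sqrt{u^2+(1-u^2)e^{-2t}},\ v+\beta t\big)$ and $\phi^{\rm L}_t(x)=e^{tB}x$. Fix $\tau_0>0$; for $\tau\in(0,\tau_0)$ let $\phi_\tau=\phi^{\rm L}_\tau\circ\phi^{\rm NL}_\tau$ and $\psi_\tau(x)=(\phi_\tau(x)-x)/\tau$. *)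

From Stdlib Require Import Reals Lra.
From Coquelicot Require Import Coquelicot.
Open Scope R_scope.

Definition vec := (R * R)%type.
Definition vadd (x y : vec) : vec := (fst x + fst y, snd x + snd y).
Definition vsub (x y : vec) : vec := (fst x - fst y, snd x - snd y).
Definition vscal (a : R) (x : vec) : vec := (a * fst x, a * snd x).
Definition inner (x y : vec) : R := fst x * fst y + snd x * snd y.
Definition vnorm (x : vec) : R := sqrt (inner x x).

Record mat2 := Mat2 { m11 : R; m12 : R; m21 : R; m22 : R }.
Definition mmul (A B : mat2) : mat2 :=
  Mat2 (m11 A * m11 B + m12 A * m21 B) (m11 A * m12 B + m12 A * m22 B)
       (m21 A * m11 B + m22 A * m21 B) (m21 A * m12 B + m22 A * m22 B).
Definition mid : mat2 := Mat2 1 0 0 1.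
Fixpoint mpow (A : mat2) (k : nat) : mat2 :=
  match k with O => mid | S k' => mmul A (mpow A k') end.
Definition mapply (A : mat2) (x : vec) : vec :=
  (m11 A * fst x + m12 A * snd x, m21 A * fst x + m22 A * snd x).

Definition mexp (t : R) (A : mat2) : mat2 :=
  Mat2 (Series (fun k => t ^ k / INR (Factorial.fact k) * m11 (mpow A k)))
       (Series (fun k => t ^ k / INR (Factorial.fact k) * m12 (mpow A k)))
       (Series (fun k => t ^ k / INR (Factorial.fact k) * m21 (mpow A k)))
       (Series (fun k => t ^ k / INR (Factorial.fact k) * m22 (mpow A k))).

Definition Bmat (g1 g2 : R) : mat2 := Mat2 0 (-1) g1 (- g2).

Definition Ffield (g1 g2 beta : R) (x : vec) : vec :=
  (fst x - fst x ^ 3 - snd x, g1 * fst x - g2 * snd x + beta).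

Definition phiNL (beta t : R) (x : vec) : vec :=
  (fst x / sqrt (fst x ^ 2 + (1 - fst x ^ 2) * exp (-2 * t)), snd x + beta * t).

Definition phiL (g1 g2 t : R) (x : vec) : vec := mapply (mexp t (Bmat g1 g2)) x.

Definition phi_tau (g1 g2 beta tau : R) (x : vec) : vec :=
  phiL g1 g2 tau (phiNL beta tau x).

Definition psi_tau (g1 g2 beta tau : R) (x : vec) : vec :=
  vscal (/ tau) (vsub (phi_tau g1 g2 beta tau x) x).

(* Write psi_tau = D_tau N_tau + (N_tau - id)/tau, where N_tau = phiNL and
   D_tau = (e^{tau B} - I)/tau = B + O(tau) by the remainder of the exponential series.
   The first component of N_tau is the exact flow p_tau of u' = u - u^3, whose slope
   e^{-2 tau}/s^{3/2} lies in [0, e^tau], exceeds 1 by at most tau e^tau, and falls short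
   of 1 by at most 4 tau (1 + u^2).  By the mean value theorem an increment of psi_tau is
   D_tau applied to a vector of size O(|dx|), plus ((p' - 1)/tau) du in the first
   coordinate: the one-sided bound only sees the upper estimate of p', the Lipschitz bound
   uses both.  For consistency,
     psi_tau - F = (D_tau - B) N_tau + B (N_tau - id) + ((p_tau(u) - u)/tau - (u - u^3), 0),
   and a second-order expansion of 1/sqrt at 1 makes the last term O(tau (1 + |u|^5)).
   Since F(0) = (0, beta), the bound on psi_tau(0) follows from consistency. *)

From Stdlib Require Import Reals Lra Lia Psatz Factorial.
From Coquelicot Require Import Coquelicot.
Open Scope R_scope.

Lemma exp_le_compat x y : x <= y -> exp x <= exp y.
Proof.
intros Hxy; destruct (Req_dec x y) as [->|Hne]; [lra|].
apply Rlt_le, exp_increasing; lra.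
Qed.

Lemma pow_le_1_add_pow n k m : 0 <= n -> (k <= m)%nat -> n ^ k <= 1 + n ^ m.
Proof.
intros Hn Hkm; assert (0 <= n ^ m) by (apply pow_le; lra).
destruct (Rle_dec n 1).
- assert (n ^ k <= 1 ^ k) by (apply pow_incr; split; lra). rewrite pow1 in *. lra.
- assert (n ^ k <= n ^ m) by (apply Rle_pow; [lra|exact Hkm]). lra.
Qed.

Lemma vnorm_nonneg x : 0 <= vnorm x.
Proof. apply sqrt_pos. Qed.

Lemma inner_self_nonneg x : 0 <= inner x x.
Proof. unfold inner; nra. Qed.

Lemma vnorm_sqr x : vnorm x ^ 2 = fst x ^ 2 + snd x ^ 2.
Proof. unfold vnorm; rewrite pow2_sqrt by apply inner_self_nonneg. unfold inner; ring. Qed.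

Lemma Rabs_fst_le_vnorm x : Rabs (fst x) <= vnorm x.
Proof.
unfold vnorm, inner; rewrite <- sqrt_Rsqr_abs; apply sqrt_le_1_alt; unfold Rsqr; nra.
Qed.

Lemma Rabs_snd_le_vnorm x : Rabs (snd x) <= vnorm x.
Proof.
unfold vnorm, inner; rewrite <- sqrt_Rsqr_abs; apply sqrt_le_1_alt; unfold Rsqr; nra.
Qed.

Lemma Rabs_mult_self a : Rabs a * Rabs a = a * a.
Proof. rewrite <- Rabs_mult; apply Rabs_right; nra. Qed.

Lemma vnorm_le_Rabs_add x : vnorm x <= Rabs (fst x) + Rabs (snd x).
Proof.
assert (H1 := Rabs_pos (fst x)); assert (H2 := Rabs_pos (snd x)).
unfold vnorm; rewrite <- (sqrt_pow2 (Rabs (fst x) + Rabs (snd x))) by lra.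
apply sqrt_le_1_alt; unfold inner.
rewrite <- (Rabs_mult_self (fst x)), <- (Rabs_mult_self (snd x)). nra.
Qed.

Lemma inner_le_vnorm x y : inner x y <= vnorm x * vnorm y.
Proof.
unfold vnorm; rewrite <- sqrt_mult by apply inner_self_nonneg.
apply Rle_trans with (Rabs (inner x y)); [apply Rle_abs|].
rewrite <- sqrt_Rsqr_abs; apply sqrt_le_1_alt.
unfold Rsqr, inner.
assert (0 <= (fst x * snd y - snd x * fst y) ^ 2) by apply pow2_ge_0. nra.
Qed.

Lemma vnorm_vadd_le x y : vnorm (vadd x y) <= vnorm x + vnorm y.
Proof.
assert (Hx := vnorm_nonneg x); assert (Hy := vnorm_nonneg y).
assert (Hxy := inner_le_vnorm x y).
assert (Ex : inner x x = vnorm x ^ 2) by (unfold vnorm; rewrite pow2_sqrt; [|apply inner_self_nonneg]; reflexivity).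
assert (Ey : inner y y = vnorm y ^ 2) by (unfold vnorm; rewrite pow2_sqrt; [|apply inner_self_nonneg]; reflexivity).
unfold vnorm at 1; rewrite <- (sqrt_pow2 (vnorm x + vnorm y)) by lra.
apply sqrt_le_1_alt.
replace (inner (vadd x y) (vadd x y)) with (inner x x + 2 * inner x y + inner y y)
  by (unfold inner, vadd; simpl; ring).
nra.
Qed.

Lemma inner_vadd_r x y z : inner x (vadd y z) = inner x y + inner x z.
Proof. unfold inner, vadd; simpl; ring. Qed.

Definition msub (A B : mat2) : mat2 :=
  Mat2 (m11 A - m11 B) (m12 A - m12 B) (m21 A - m21 B) (m22 A - m22 B).
Definition mscal (a : R) (A : mat2) : mat2 :=
  Mat2 (a * m11 A) (a * m12 A) (a * m21 A) (a * m22 A).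
Definition mnorm1 (A : mat2) : R :=
  Rabs (m11 A) + Rabs (m12 A) + Rabs (m21 A) + Rabs (m22 A).

Lemma mnorm1_nonneg A : 0 <= mnorm1 A.
Proof.
unfold mnorm1; generalize (Rabs_pos (m11 A)) (Rabs_pos (m12 A)) (Rabs_pos (m21 A))
  (Rabs_pos (m22 A)); lra.
Qed.

Lemma mnorm1_le_msub A B : mnorm1 A <= mnorm1 (msub A B) + mnorm1 B.
Proof.
assert (T : forall a b, Rabs a <= Rabs (a - b) + Rabs b)
  by (intros a b; replace a with ((a - b) + b) at 1 by ring; apply Rabs_triang).
unfold mnorm1, msub; simpl.
generalize (T (m11 A) (m11 B)) (T (m12 A) (m12 B)) (T (m21 A) (m21 B)) (T (m22 A) (m22 B)).
lra.
Qed.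

Lemma Rabs_lin2_le a b p q : Rabs (a * p + b * q) <= Rabs a * Rabs p + Rabs b * Rabs q.
Proof. rewrite <- !Rabs_mult; apply Rabs_triang. Qed.

Lemma mnorm1_mmul A B : mnorm1 (mmul A B) <= mnorm1 A * mnorm1 B.
Proof.
unfold mnorm1, mmul; simpl.
generalize (Rabs_lin2_le (m11 A) (m12 A) (m11 B) (m21 B))
  (Rabs_lin2_le (m11 A) (m12 A) (m12 B) (m22 B))
  (Rabs_lin2_le (m21 A) (m22 A) (m11 B) (m21 B))
  (Rabs_lin2_le (m21 A) (m22 A) (m12 B) (m22 B)).
generalize (Rabs_pos (m11 A)) (Rabs_pos (m12 A)) (Rabs_pos (m21 A)) (Rabs_pos (m22 A))
  (Rabs_pos (m11 B)) (Rabs_pos (m12 B)) (Rabs_pos (m21 B)) (Rabs_pos (m22 B)).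
nra.
Qed.

Lemma mnorm1_mpow A k : mnorm1 (mpow A k) <= 2 * mnorm1 A ^ k.
Proof.
induction k as [|k IH]; simpl.
- unfold mnorm1; simpl. rewrite Rabs_R1, Rabs_R0; lra.
- apply Rle_trans with (mnorm1 A * mnorm1 (mpow A k)); [apply mnorm1_mmul|].
  assert (H := mnorm1_nonneg A).
  apply Rle_trans with (mnorm1 A * (2 * mnorm1 A ^ k)); [apply Rmult_le_compat_l; lra|lra].
Qed.

Lemma vnorm_mapply_le A x : vnorm (mapply A x) <= mnorm1 A * vnorm x.
Proof.
assert (Hu := Rabs_fst_le_vnorm x); assert (Hv := Rabs_snd_le_vnorm x).
eapply Rle_trans; [apply vnorm_le_Rabs_add|]. unfold mapply, mnorm1; simpl.
generalize (Rabs_lin2_le (m11 A) (m12 A) (fst x) (snd x))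
  (Rabs_lin2_le (m21 A) (m22 A) (fst x) (snd x)).
generalize (Rabs_pos (m11 A)) (Rabs_pos (m12 A)) (Rabs_pos (m21 A)) (Rabs_pos (m22 A)).
nra.
Qed.

(** * The linear flow *)

Lemma is_series_exp x : is_series (fun k => x ^ k / INR (fact k)) (exp x).
Proof.
eapply is_series_ext; [|apply is_exp_Reals]. intros n; simpl.
unfold scal; simpl; unfold mult; simpl. rewrite pow_n_pow. unfold Rdiv; ring.
Qed.

Lemma inv_fact_SS_le k : / INR (fact (S (S k))) <= / INR (fact k).
Proof.
apply Rinv_le_contravar; [apply lt_0_INR, lt_O_fact|].
apply le_INR, fact_le; lia.
Qed.

Lemma Rabs_exp_series_term_le (c : nat -> R) t L M k : 0 <= t ->
  Rabs (c k) <= M * L ^ k ->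
  Rabs (t ^ k / INR (fact k) * c k) <= M * ((t * L) ^ k / INR (fact k)).
Proof.
intros Ht Hck.
assert (Hk : 0 < / INR (fact k)) by apply Rinv_0_lt_compat, lt_0_INR, lt_O_fact.
assert (0 <= t ^ k) by (apply pow_le; lra).
unfold Rdiv; rewrite Rpow_mult_distr, !Rabs_mult, Rabs_inv, (Rabs_right (INR _)),
  (Rabs_right (t ^ k)) by (apply Rle_ge; auto using pos_INR).
apply Rle_trans with (t ^ k * / INR (fact k) * (M * L ^ k)); [|right; ring].
apply Rmult_le_compat_l; [nra|exact Hck].
Qed.

Lemma exp_series_remainder (c : nat -> R) t L M : 0 <= t -> 0 <= L ->
  (forall k, Rabs (c k) <= M * L ^ k) ->
  Rabs (Series (fun k => t ^ k / INR (fact k) * c k) - c 0%nat - t * c 1%nat)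
    <= M * (t * L) ^ 2 * exp (t * L).
Proof.
intros Ht HL Hc.
assert (HM : 0 <= M) by (generalize (Hc 0%nat) (Rabs_pos (c 0%nat)); simpl; lra).
set (f k := t ^ k / INR (fact k) * c k).
set (g k := M * (t * L) ^ 2 * ((t * L) ^ k / INR (fact k))).
assert (Hg : is_series g (M * (t * L) ^ 2 * exp (t * L)))
  by (apply (is_series_scal_l (V := R_NormedModule)), is_series_exp).
assert (Hf : forall k, Rabs (f k) <= M * ((t * L) ^ k / INR (fact k)))
  by (intros k; apply Rabs_exp_series_term_le; auto).
assert (Hf2 : forall k, Rabs (f (S (S k))) <= g k).
{ intros k; eapply Rle_trans; [apply Hf|]; unfold g.
  assert (0 <= (t * L) ^ k) by (apply pow_le; nra).
  assert (0 <= (t * L) ^ 2) by (apply pow_le; nra).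
  assert (Hfact := inv_fact_SS_le k).
  replace ((t * L) ^ S (S k)) with ((t * L) ^ 2 * (t * L) ^ k) by (simpl; ring).
  unfold Rdiv; rewrite !Rmult_assoc.
  apply Rmult_le_compat_l; [lra|]. rewrite <- !Rmult_assoc.
  apply Rmult_le_compat_l; [nra|lra]. }
assert (Hex_g : ex_series g) by (eexists; exact Hg).
assert (Hex_f : ex_series f).
{ apply ex_series_Rabs, (ex_series_le (K := R_AbsRing) (V := R_CompleteNormedModule) _
    (fun k => M * ((t * L) ^ k / INR (fact k)))).
  - intros k; unfold norm; simpl; unfold abs; simpl; rewrite Rabs_Rabsolu; apply Hf.
  - eexists; apply (is_series_scal_l (V := R_NormedModule)), is_series_exp. }
rewrite (Series_incr_1 f Hex_f), (Series_incr_1 (fun k => f (S k)))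
  by (apply (ex_series_incr_1 f); exact Hex_f).
replace (f 0%nat + (f 1%nat + Series (fun k => f (S (S k)))) - c 0%nat - t * c 1%nat)
  with (Series (fun k => f (S (S k)))) by (unfold f; simpl; field).
rewrite <- (is_series_unique _ _ Hg).
eapply Rle_trans; [apply Series_Rabs|apply Series_le; [split; [apply Rabs_pos|apply Hf2]|exact Hex_g]].
apply (ex_series_le (K := R_AbsRing) (V := R_CompleteNormedModule) _ g); [|exact Hex_g].
intros k; unfold norm; simpl; unfold abs; simpl; rewrite Rabs_Rabsolu; apply Hf2.
Qed.

Definition mexp_quot (t : R) (A : mat2) : mat2 := mscal (/ t) (msub (mexp t A) mid).

Lemma mexp_entry_quot_sub (m : mat2 -> R) A t :
  (forall X, Rabs (m X) <= mnorm1 X) -> m (mpow A 1) = m A -> 0 < t ->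
  Rabs (/ t * (Series (fun k => t ^ k / INR (fact k) * m (mpow A k)) - m mid) - m A)
    <= 2 * mnorm1 A ^ 2 * exp (t * mnorm1 A) * t.
Proof.
intros Hm HA1 Ht.
assert (HL := mnorm1_nonneg A).
assert (Hrem := exp_series_remainder (fun k => m (mpow A k)) t (mnorm1 A) 2
  ltac:(lra) HL (fun k => Rle_trans _ _ _ (Hm _) (mnorm1_mpow A k))).
cbn beta in Hrem; rewrite HA1 in Hrem.
set (S := Series _) in *.
replace (/ t * (S - m mid) - m A) with (/ t * (S - m mid - t * m A)) by (field; lra).
rewrite Rabs_mult, Rabs_inv, (Rabs_right t) by lra.
apply Rmult_le_reg_l with t; [lra|].
rewrite <- Rmult_assoc, Rinv_r, Rmult_1_l by lra.
eapply Rle_trans; [exact Hrem|right; ring].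
Qed.

Lemma mnorm1_mexp_quot_sub A t : 0 < t ->
  mnorm1 (msub (mexp_quot t A) A) <= 8 * mnorm1 A ^ 2 * exp (t * mnorm1 A) * t.
Proof.
intros Ht.
assert (E : forall X, Rabs (m11 X) <= mnorm1 X /\ Rabs (m12 X) <= mnorm1 X
          /\ Rabs (m21 X) <= mnorm1 X /\ Rabs (m22 X) <= mnorm1 X).
{ intros X; unfold mnorm1.
  generalize (Rabs_pos (m11 X)) (Rabs_pos (m12 X)) (Rabs_pos (m21 X)) (Rabs_pos (m22 X)).
  lra. }
assert (Q11 := mexp_entry_quot_sub m11 A t (fun X => proj1 (E X)) ltac:(simpl; ring) Ht).
assert (Q12 := mexp_entry_quot_sub m12 A t (fun X => proj1 (proj2 (E X))) ltac:(simpl; ring) Ht).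
assert (Q21 := mexp_entry_quot_sub m21 A t
  (fun X => proj1 (proj2 (proj2 (E X)))) ltac:(simpl; ring) Ht).
assert (Q22 := mexp_entry_quot_sub m22 A t
  (fun X => proj2 (proj2 (proj2 (E X)))) ltac:(simpl; ring) Ht).
unfold mnorm1 at 1; cbn [msub mexp_quot mscal m11 m12 m21 m22].
change (Series _) with (m11 (mexp t A)) in Q11.
change (Series _) with (m12 (mexp t A)) in Q12.
change (Series _) with (m21 (mexp t A)) in Q21.
change (Series _) with (m22 (mexp t A)) in Q22.
lra.
Qed.

Lemma mexp_quot_sub_bound A t0 : exists K, 0 <= K /\
  forall t, 0 < t < t0 -> mnorm1 (msub (mexp_quot t A) A) <= K * t.
Proof.
assert (HL := mnorm1_nonneg A).
exists (8 * mnorm1 A ^ 2 * exp (t0 * mnorm1 A)); split.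
{ generalize (exp_pos (t0 * mnorm1 A)); nra. }
intros t Ht; eapply Rle_trans; [apply mnorm1_mexp_quot_sub, Ht|].
apply Rmult_le_compat_r; [lra|].
apply Rmult_le_compat_l; [nra|apply exp_le_compat; nra].
Qed.

Lemma mexp_quot_bounded A t0 : 0 < t0 -> exists Dn, 0 <= Dn /\
  forall t, 0 < t < t0 -> mnorm1 (mexp_quot t A) <= Dn.
Proof.
intros Ht0; destruct (mexp_quot_sub_bound A t0) as [K [HK HKt]].
assert (HL := mnorm1_nonneg A).
exists (mnorm1 A + K * t0); split; [nra|].
intros t Ht; eapply Rle_trans; [apply (mnorm1_le_msub _ A)|].
assert (K * t <= K * t0) by (apply Rmult_le_compat_l; lra).
generalize (HKt t Ht); lra.
Qed.

(** * The nonlinear flow *)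

Definition cubic_flow_denom (t u : R) : R := u ^ 2 + (1 - u ^ 2) * exp (-2 * t).
(* the first component of [phiNL]: the time-[t] flow of [u' = u - u^3] *)
Definition cubic_flow (t u : R) : R := u / sqrt (cubic_flow_denom t u).
Definition cubic_flow_slope (t u : R) : R :=
  exp (-2 * t) / (cubic_flow_denom t u * sqrt (cubic_flow_denom t u)).

Lemma exp_neg2_bounds t : 0 <= t ->
  0 < exp (-2 * t) <= 1 /\ 1 - 2 * t <= exp (-2 * t) <= 1 - 2 * t + 4 * t ^ 2.
Proof.
intros Ht; assert (Hpos := exp_pos (-2 * t)).
assert (Hinv : exp (-2 * t) * exp (2 * t) = 1)
  by (rewrite <- exp_plus, <- exp_0; f_equal; ring).
assert (H1 := exp_ineq1_le (-2 * t)); assert (H2 := exp_ineq1_le (2 * t)).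
assert (exp (-2 * t) * (1 + 2 * t) <= 1) by nra.
assert (1 <= (1 + 2 * t) * (1 - 2 * t + 4 * t ^ 2)) by nra.
repeat split; nra.
Qed.

Lemma sqrt_exp_neg2 t : sqrt (exp (-2 * t)) = exp (- t).
Proof.
rewrite <- (sqrt_pow2 (exp (- t))) by apply Rlt_le, exp_pos.
f_equal; simpl; rewrite Rmult_1_r, <- exp_plus; f_equal; ring.
Qed.

Lemma exp_sub_1_le t : 0 <= t -> exp t - 1 <= t * exp t.
Proof.
intros Ht; assert (H := exp_ineq1_le (- t)).
assert (exp t * exp (- t) = 1) by (rewrite <- exp_plus, <- exp_0; f_equal; ring).
assert (H3 := exp_pos t); nra.
Qed.

Lemma cubic_flow_denom_bounds t u : 0 <= t ->
  exp (-2 * t) <= cubic_flow_denom t u <= 1 + u ^ 2 * (1 - exp (-2 * t)).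
Proof.
intros Ht; destruct (exp_neg2_bounds t Ht) as [[H1 H2] _].
unfold cubic_flow_denom; split; nra.
Qed.

Lemma exp_neg_le_sqrt_denom t u : 0 <= t -> exp (- t) <= sqrt (cubic_flow_denom t u).
Proof.
intros Ht; rewrite <- sqrt_exp_neg2.
apply sqrt_le_1_alt, (cubic_flow_denom_bounds t u Ht).
Qed.

Lemma inv_sqrt_denom_le t u : 0 <= t -> / sqrt (cubic_flow_denom t u) <= exp t.
Proof.
intros Ht; assert (H := exp_neg_le_sqrt_denom t u Ht); assert (Hp := exp_pos (- t)).
rewrite <- (Rinv_inv (exp t)), <- exp_Ropp.
apply Rinv_le_contravar; lra.
Qed.

Lemma Rabs_cubic_flow_le t u : 0 <= t -> Rabs (cubic_flow t u) <= exp t * Rabs u.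
Proof.
intros Ht; assert (H := inv_sqrt_denom_le t u Ht).
assert (Hp : 0 < sqrt (cubic_flow_denom t u))
  by (generalize (exp_neg_le_sqrt_denom t u Ht) (exp_pos (- t)); lra).
unfold cubic_flow, Rdiv; rewrite Rabs_mult, Rabs_inv, (Rabs_right (sqrt _)) by lra.
rewrite Rmult_comm; apply Rmult_le_compat_r; [apply Rabs_pos|exact H].
Qed.

Lemma is_derive_cubic_flow t u : 0 <= t ->
  is_derive (cubic_flow t) u (cubic_flow_slope t u).
Proof.
intros Ht.
assert (Hs : 0 < cubic_flow_denom t u)
  by (generalize (cubic_flow_denom_bounds t u Ht) (exp_pos (-2 * t)); lra).
unfold cubic_flow, cubic_flow_slope, cubic_flow_denom in *.
set (b := exp (-2 * t)) in *; set (s := u ^ 2 + (1 - u ^ 2) * b) in *.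
assert (Es : u * (u * 1) + (1 + - (u * (u * 1))) * b = s) by (unfold s; ring).
assert (Hr := sqrt_sqrt s (Rlt_le _ _ Hs)); assert (Hrp := sqrt_lt_R0 s Hs).
auto_derive; rewrite Es.
- repeat split; [lra|apply Rgt_not_eq; lra].
- assert (Hb : b = sqrt s * sqrt s - u ^ 2 * (1 - b)) by (rewrite Hr; unfold s; ring).
  set (r := sqrt s) in *; clearbody r.
  rewrite <- Hr; rewrite Hb at 2; field; lra.
Qed.

Lemma inv_sqr_ge y : 0 <= y -> 1 - 2 * y <= / (1 + y) ^ 2.
Proof.
intros Hy; assert (Hq : 0 < (1 + y) ^ 2) by nra.
apply Rmult_le_reg_r with ((1 + y) ^ 2); [exact Hq|].
rewrite Rinv_l by lra. nra.
Qed.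

Lemma cubic_flow_slope_bounds t u : 0 <= t ->
  0 <= cubic_flow_slope t u <= exp t /\ 1 - cubic_flow_slope t u <= 4 * t * (1 + u ^ 2).
Proof.
intros Ht.
destruct (exp_neg2_bounds t Ht) as [[Hb0 Hb1] [Hb2 _]].
destruct (cubic_flow_denom_bounds t u Ht) as [Hs1 Hs2].
assert (Hsq := exp_neg_le_sqrt_denom t u Ht).
assert (Hinv : exp (- t) * exp t = 1) by (rewrite <- exp_plus, <- exp_0; f_equal; ring).
assert (Hem := exp_pos (- t)); assert (Hep := exp_pos t).
unfold cubic_flow_slope.
set (b := exp (-2 * t)) in *; set (s := cubic_flow_denom t u) in *.
assert (Hss : b * exp (- t) <= s * sqrt s) by (apply Rmult_le_compat; lra).
set (q := 1 + u ^ 2 * (1 - b)) in *.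
assert (Hsq0 := sqrt_pos s).
assert (Hq1 : 1 <= q) by (unfold q; nra).
assert (Hsqq : sqrt s <= q).
{ assert (Hsq1 : 1 <= sqrt q) by (rewrite <- sqrt_1; apply sqrt_le_1_alt; lra).
  assert (sqrt q * sqrt q = q) by (apply sqrt_sqrt; lra).
  apply Rle_trans with (sqrt q); [apply sqrt_le_1_alt; exact Hs2|nra]. }
assert (Hsq2 : s * sqrt s <= q ^ 2) by (simpl; rewrite Rmult_1_r; apply Rmult_le_compat; lra).
assert (Hlow : b / q ^ 2 <= b / (s * sqrt s)).
{ unfold Rdiv; apply Rmult_le_compat_l; [lra|apply Rinv_le_contravar; nra]. }
assert (Hq2 : 1 - 2 * (u ^ 2 * (1 - b)) <= / q ^ 2) by (apply inv_sqr_ge; nra).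
split; [split|].
- apply Rle_mult_inv_pos; nra.
- apply Rmult_le_reg_r with (s * sqrt s); [nra|].
  unfold Rdiv; rewrite Rmult_assoc, Rinv_l, Rmult_1_r by nra. nra.
- assert (0 <= u ^ 2) by nra.
  assert (b * (1 - 2 * (u ^ 2 * (1 - b))) <= b / q ^ 2)
    by (unfold Rdiv; apply Rmult_le_compat_l; lra).
  nra.
Qed.

Lemma sqr_le_between a b c : Rmin a b <= c <= Rmax a b -> c ^ 2 <= a ^ 2 + b ^ 2.
Proof.
intros H; destruct (Rle_dec a b).
- rewrite Rmin_left, Rmax_right in H by lra; destruct (Rle_dec 0 c); nra.
- rewrite Rmin_right, Rmax_left in H by lra; destruct (Rle_dec 0 c); nra.
Qed.

Lemma cubic_flow_increment t u1 u2 : 0 < t -> exists l,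
  0 <= l <= exp t /\ l - 1 <= t * exp t
  /\ Rabs (l - 1) <= t * (exp t + 4) * (1 + u1 ^ 2 + u2 ^ 2)
  /\ cubic_flow t u2 - cubic_flow t u1 = l * (u2 - u1).
Proof.
intros Ht.
destruct (MVT_gen (cubic_flow t) u1 u2 (cubic_flow_slope t)) as [c [Hc Hmvt]].
- intros x _; apply is_derive_cubic_flow; lra.
- intros x _; apply (proj2 (continuity_pt_filterlim _ _)), (ex_derive_continuous (cubic_flow t)).
  eexists; apply is_derive_cubic_flow; lra.
- exists (cubic_flow_slope t c).
  destruct (cubic_flow_slope_bounds t c (Rlt_le _ _ Ht)) as [[Hl0 Hl1] Hl2].
  assert (Hc2 := sqr_le_between _ _ _ Hc).
  assert (Hup := exp_sub_1_le t (Rlt_le _ _ Ht)).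
  assert (Hep := exp_pos t).
  assert (0 <= u1 ^ 2) by nra; assert (0 <= u2 ^ 2) by nra; assert (0 <= c ^ 2) by nra.
  repeat split; try lra.
  apply Rabs_le; split.
  + assert (4 * t * (1 + c ^ 2) <= 4 * t * (1 + u1 ^ 2 + u2 ^ 2))
      by (apply Rmult_le_compat_l; lra).
    assert (0 <= t * exp t * (1 + u1 ^ 2 + u2 ^ 2)) by (apply Rmult_le_pos; nra).
    nra.
  + assert (t * exp t * 1 <= t * exp t * (1 + u1 ^ 2 + u2 ^ 2))
      by (apply Rmult_le_compat_l; nra).
    assert (0 <= 4 * t * (1 + u1 ^ 2 + u2 ^ 2)) by nra.
    nra.
Qed.

Lemma inv_sqrt_sub_linear_le r a t u E :
  0 < r -> r * r = 1 + (u ^ 2 - 1) * a -> 0 <= a <= 2 * t ->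
  Rabs (t - a / 2) <= 2 * t ^ 2 -> / r <= E ->
  Rabs (/ r - 1 - t * (1 - u ^ 2)) <= t ^ 2 * (1 + u ^ 2) ^ 2 * (4 + 4 * E).
Proof.
intros Hr Hrr Ha Hta HE.
assert (Hir : 0 < / r) by (apply Rinv_0_lt_compat; lra).
(* second-order expansion of 1/r around r = 1, where r^2 - 1 = (u^2 - 1) a and a ~ 2t *)
assert (Hid : / r - 1 - t * (1 - u ^ 2) = (r - 1) ^ 2 * (/ 2 + / r) + (u ^ 2 - 1) * (t - a / 2)).
{ replace ((u ^ 2 - 1) * (t - a / 2)) with ((u ^ 2 - 1) * t - (r * r - 1) / 2)
    by (rewrite Hrr; field).
  field; lra. }
assert (Hrr1 : (r * r - 1) ^ 2 <= 4 * t ^ 2 * (1 + u ^ 2) ^ 2).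
{ rewrite Hrr; replace ((1 + (u ^ 2 - 1) * a - 1) ^ 2) with ((u ^ 2 - 1) ^ 2 * a ^ 2) by ring.
  replace (4 * t ^ 2 * (1 + u ^ 2) ^ 2) with ((1 + u ^ 2) ^ 2 * (2 * t) ^ 2) by ring.
  apply Rmult_le_compat; try apply pow2_ge_0; nra. }
assert (HQ : 0 <= (r - 1) ^ 2 * (/ 2 + / r) <= t ^ 2 * (1 + u ^ 2) ^ 2 * (2 + 4 * E)).
{ assert ((r - 1) ^ 2 <= (r * r - 1) ^ 2)
    by (replace ((r * r - 1) ^ 2) with ((r - 1) ^ 2 * (r + 1) ^ 2) by ring;
        rewrite <- (Rmult_1_r ((r - 1) ^ 2)) at 1;
        apply Rmult_le_compat_l; [apply pow2_ge_0|nra]).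
  split; [apply Rmult_le_pos; [apply pow2_ge_0|lra]|].
  apply Rle_trans with (4 * t ^ 2 * (1 + u ^ 2) ^ 2 * (/ 2 + E)); [|right; field].
  apply Rmult_le_compat; try apply pow2_ge_0; lra. }
assert (HL : Rabs ((u ^ 2 - 1) * (t - a / 2)) <= t ^ 2 * (1 + u ^ 2) ^ 2 * 2).
{ rewrite Rabs_mult.
  assert (Rabs (u ^ 2 - 1) <= 1 + u ^ 2) by (apply Rabs_le; nra).
  assert (1 + u ^ 2 <= (1 + u ^ 2) ^ 2) by nra.
  apply Rle_trans with ((1 + u ^ 2) * (2 * t ^ 2)); [apply Rmult_le_compat; auto using Rabs_pos|].
  nra. }
rewrite Hid; eapply Rle_trans; [apply Rabs_triang|].
rewrite (Rabs_right ((r - 1) ^ 2 * _)) by lra. lra.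
Qed.

Lemma cubic_flow_consistency t u : 0 < t ->
  Rabs ((cubic_flow t u - u) / t - (u - u ^ 3)) <= t * (16 + 16 * exp t) * (1 + Rabs u ^ 5).
Proof.
intros Ht.
destruct (exp_neg2_bounds t (Rlt_le _ _ Ht)) as [[Hb0 Hb1] [Hb2 Hb3]].
assert (Hsq := exp_neg_le_sqrt_denom t u (Rlt_le _ _ Ht)).
assert (Hinv := inv_sqrt_denom_le t u (Rlt_le _ _ Ht)).
assert (Hrr : sqrt (cubic_flow_denom t u) * sqrt (cubic_flow_denom t u)
              = 1 + (u ^ 2 - 1) * (1 - exp (-2 * t))).
{ rewrite sqrt_sqrt; [unfold cubic_flow_denom; ring|].
  generalize (cubic_flow_denom_bounds t u (Rlt_le _ _ Ht)); lra. }
assert (Hem := exp_pos (- t)).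
assert (Hcore := inv_sqrt_sub_linear_le (sqrt (cubic_flow_denom t u)) (1 - exp (-2 * t)) t u
  (exp t) ltac:(lra) Hrr ltac:(lra) ltac:(apply Rabs_le; split; nra) Hinv).
unfold cubic_flow; set (r := sqrt (cubic_flow_denom t u)) in *.
replace ((u / r - u) / t - (u - u ^ 3)) with (u / t * (/ r - 1 - t * (1 - u ^ 2)))
  by (field; lra).
assert (Hu : Rabs u * (1 + u ^ 2) ^ 2 <= 4 * (1 + Rabs u ^ 5)).
{ assert (Hn := Rabs_pos u).
  assert (H1 := pow_le_1_add_pow (Rabs u) 1 5 Hn ltac:(lia)).
  assert (H3 := pow_le_1_add_pow (Rabs u) 3 5 Hn ltac:(lia)).
  rewrite <- (pow2_abs u); simpl in *; nra. }
unfold Rdiv; rewrite Rabs_mult, Rabs_mult, Rabs_inv, (Rabs_right t) by lra.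
apply Rle_trans with (Rabs u * / t * (t ^ 2 * (1 + u ^ 2) ^ 2 * (4 + 4 * exp t))).
- apply Rmult_le_compat_l; [|exact Hcore].
  apply Rmult_le_pos; [apply Rabs_pos|apply Rlt_le, Rinv_0_lt_compat; lra].
- replace (Rabs u * / t * (t ^ 2 * (1 + u ^ 2) ^ 2 * (4 + 4 * exp t)))
    with (t * (4 + 4 * exp t) * (Rabs u * (1 + u ^ 2) ^ 2)) by (field; lra).
  replace (t * (16 + 16 * exp t) * (1 + Rabs u ^ 5))
    with (t * (4 + 4 * exp t) * (4 * (1 + Rabs u ^ 5))) by ring.
  apply Rmult_le_compat_l; [generalize (exp_pos t); nra|exact Hu].
Qed.

(** * The splitting map *)

Lemma vnorm_le_vsub_add x y : vnorm x <= vnorm (vsub x y) + vnorm y.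
Proof.
replace x with (vadd (vsub x y) y) at 1 by (destruct x, y; unfold vadd, vsub; simpl; f_equal; ring).
apply vnorm_vadd_le.
Qed.

Lemma vnorm_fst_only_le a : vnorm (a, 0) <= Rabs a.
Proof. eapply Rle_trans; [apply vnorm_le_Rabs_add|]; simpl; rewrite Rabs_R0; lra. Qed.

Lemma vnorm_scale_fst_le l x : vnorm (l * fst x, snd x) <= (Rabs l + 1) * vnorm x.
Proof.
eapply Rle_trans; [apply vnorm_le_Rabs_add|]; simpl; rewrite Rabs_mult.
assert (Hu := Rabs_fst_le_vnorm x); assert (Hv := Rabs_snd_le_vnorm x).
assert (Rabs l * Rabs (fst x) <= Rabs l * vnorm x)
  by (apply Rmult_le_compat_l; [apply Rabs_pos|exact Hu]).
lra.
Qed.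

Lemma phiNL_eq beta t x : phiNL beta t x = (cubic_flow t (fst x), snd x + beta * t).
Proof. reflexivity. Qed.

Lemma psi_tau_decomp g1 g2 beta t x :
  psi_tau g1 g2 beta t x = vadd (mapply (mexp_quot t (Bmat g1 g2)) (phiNL beta t x))
                                (vscal (/ t) (vsub (phiNL beta t x) x)).
Proof.
unfold psi_tau, phi_tau, phiL, mexp_quot.
generalize (phiNL beta t x) (mexp t (Bmat g1 g2)); intros [y1 y2] [a b c d].
destruct x; unfold vadd, vscal, vsub, mapply, mscal, msub, mid; simpl; f_equal; ring.
Qed.

Lemma psi_tau_increment g1 g2 beta t x1 x2 : 0 < t -> exists l,
  0 <= l <= exp t /\ l - 1 <= t * exp t
  /\ Rabs (l - 1) <= t * (exp t + 4) * (1 + fst x1 ^ 2 + fst x2 ^ 2)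
  /\ vsub (psi_tau g1 g2 beta t x2) (psi_tau g1 g2 beta t x1)
     = vadd (mapply (mexp_quot t (Bmat g1 g2)) (l * fst (vsub x2 x1), snd (vsub x2 x1)))
            ((l - 1) / t * fst (vsub x2 x1), 0).
Proof.
intros Ht.
destruct (cubic_flow_increment t (fst x1) (fst x2) Ht) as [l [Hl0 [Hl1 [Hl2 Hinc]]]].
exists l; split; [|split; [|split]]; try assumption.
rewrite !psi_tau_decomp, !phiNL_eq.
replace (cubic_flow t (fst x2)) with (cubic_flow t (fst x1) + l * (fst x2 - fst x1)) by lra.
destruct (mexp_quot t (Bmat g1 g2)) as [a b c d]; destruct x1, x2.
unfold vadd, vscal, vsub, mapply; simpl; f_equal; field; lra.
Qed.

Lemma psi_tau_one_sided_lipschitz g1 g2 beta t0 : 0 < t0 -> exists C, 0 < C /\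
  forall t, 0 < t < t0 -> forall x1 x2,
  inner (vsub x2 x1) (vsub (psi_tau g1 g2 beta t x2) (psi_tau g1 g2 beta t x1))
    <= C * vnorm (vsub x2 x1) ^ 2.
Proof.
intros Ht0; destruct (mexp_quot_bounded (Bmat g1 g2) t0 Ht0) as [Dn [HDn HD]].
assert (He0 := exp_pos t0).
exists (Dn * (exp t0 + 1) + exp t0 + 1); split; [nra|].
intros t Ht x1 x2.
destruct (psi_tau_increment g1 g2 beta t x1 x2 (proj1 Ht)) as [l [Hl0 [Hl1 [_ ->]]]].
set (d := vsub x2 x1); specialize (HD t Ht); set (D := mexp_quot t _) in *.
clearbody d D.
assert (Het : exp t <= exp t0) by (apply exp_le_compat; lra).
assert (Hd := vnorm_nonneg d).
assert (Hdu : fst d ^ 2 <= vnorm d ^ 2) by (rewrite vnorm_sqr; nra).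
assert (Hlin : inner d (mapply D (l * fst d, snd d)) <= Dn * (exp t0 + 1) * vnorm d ^ 2).
{ eapply Rle_trans; [apply inner_le_vnorm|].
  assert (Hw := vnorm_scale_fst_le l d); rewrite Rabs_right in Hw by lra.
  assert (HDw := vnorm_mapply_le D (l * fst d, snd d)).
  assert (H0D := mnorm1_nonneg D).
  assert (vnorm (mapply D (l * fst d, snd d)) <= Dn * ((exp t0 + 1) * vnorm d)).
  { eapply Rle_trans; [exact HDw|]; apply Rmult_le_compat; try lra.
    apply vnorm_nonneg. eapply Rle_trans; [exact Hw|]. apply Rmult_le_compat_r; lra. }
  apply Rle_trans with (vnorm d * (Dn * ((exp t0 + 1) * vnorm d))); [apply Rmult_le_compat_l; lra|].
  right; ring. }
assert (Hnl : inner d ((l - 1) / t * fst d, 0) <= exp t0 * vnorm d ^ 2).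
{ unfold inner; simpl.
  assert (Hq : (l - 1) / t <= exp t0) by (apply Rmult_le_reg_r with t; [lra|]; unfold Rdiv;
    rewrite Rmult_assoc, Rinv_l, Rmult_1_r by lra; nra).
  assert ((l - 1) / t * fst d ^ 2 <= exp t0 * fst d ^ 2)
    by (apply Rmult_le_compat_r; [apply pow2_ge_0|exact Hq]).
  assert (exp t0 * fst d ^ 2 <= exp t0 * vnorm d ^ 2)
    by (apply Rmult_le_compat_l; [generalize (exp_pos t0); lra|exact Hdu]).
  nra. }
rewrite inner_vadd_r.
assert (0 <= vnorm d ^ 2) by apply pow2_ge_0.
nra.
Qed.

Lemma fst_sqr_le_1_add_vnorm_pow3 x : fst x ^ 2 <= 1 + vnorm x ^ 3.
Proof.
rewrite <- pow2_abs.
apply Rle_trans with (vnorm x ^ 2);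
  [apply pow_incr; split; [apply Rabs_pos|apply Rabs_fst_le_vnorm]|].
apply pow_le_1_add_pow; [apply vnorm_nonneg|lia].
Qed.

Lemma psi_tau_local_lipschitz g1 g2 beta t0 : 0 < t0 -> exists C, 0 < C /\
  forall t, 0 < t < t0 -> forall x1 x2,
  vnorm (vsub (psi_tau g1 g2 beta t x2) (psi_tau g1 g2 beta t x1))
    <= C * (1 + vnorm x1 ^ 3 + vnorm x2 ^ 3) * vnorm (vsub x2 x1).
Proof.
intros Ht0; destruct (mexp_quot_bounded (Bmat g1 g2) t0 Ht0) as [Dn [HDn HD]].
assert (He0 := exp_pos t0).
exists (Dn * (exp t0 + 1) + 3 * (exp t0 + 4)); split; [nra|].
intros t Ht x1 x2.
assert (Het : exp t <= exp t0) by (apply exp_le_compat; lra).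
assert (H1 := fst_sqr_le_1_add_vnorm_pow3 x1); assert (H2 := fst_sqr_le_1_add_vnorm_pow3 x2).
assert (Hn1 : 0 <= vnorm x1 ^ 3) by (apply pow_le, vnorm_nonneg).
assert (Hn2 : 0 <= vnorm x2 ^ 3) by (apply pow_le, vnorm_nonneg).
set (Z := 1 + vnorm x1 ^ 3 + vnorm x2 ^ 3).
destruct (psi_tau_increment g1 g2 beta t x1 x2 (proj1 Ht)) as [l [Hl0 [_ [Hl2 ->]]]].
set (d := vsub x2 x1); specialize (HD t Ht); set (D := mexp_quot t _) in *.
clearbody d D.
assert (Hd := vnorm_nonneg d).
assert (Hlin : vnorm (mapply D (l * fst d, snd d)) <= Dn * (exp t0 + 1) * vnorm d).
{ assert (Hw := vnorm_scale_fst_le l d); rewrite Rabs_right in Hw by lra.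
  eapply Rle_trans; [apply vnorm_mapply_le|]; rewrite Rmult_assoc.
  apply Rmult_le_compat; [apply mnorm1_nonneg|apply vnorm_nonneg|exact HD|].
  eapply Rle_trans; [exact Hw|]; apply Rmult_le_compat_r; lra. }
assert (Hq : Rabs ((l - 1) / t) <= 3 * (exp t0 + 4) * Z).
{ unfold Rdiv; rewrite Rabs_mult, Rabs_inv, (Rabs_right t) by lra.
  apply Rmult_le_reg_r with t; [lra|]; rewrite Rmult_assoc, Rinv_l, Rmult_1_r by lra.
  eapply Rle_trans; [exact Hl2|].
  assert (t * (exp t + 4) <= t * (exp t0 + 4)) by (apply Rmult_le_compat_l; lra).
  assert (0 <= t * (exp t0 + 4)) by nra.
  unfold Z; nra. }
assert (Hnl : vnorm ((l - 1) / t * fst d, 0) <= 3 * (exp t0 + 4) * Z * vnorm d).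
{ eapply Rle_trans; [apply vnorm_fst_only_le|]; rewrite Rabs_mult.
  apply Rmult_le_compat; [apply Rabs_pos|apply Rabs_pos|exact Hq|apply Rabs_fst_le_vnorm]. }
eapply Rle_trans; [apply vnorm_vadd_le|].
assert (Dn * (exp t0 + 1) * vnorm d <= Dn * (exp t0 + 1) * Z * vnorm d).
{ apply Rmult_le_compat_r; [lra|].
  rewrite <- (Rmult_1_r (Dn * (exp t0 + 1))) at 1.
  apply Rmult_le_compat_l; [nra|unfold Z; lra]. }
nra.
Qed.

Lemma vnorm_le_1_add_pow5 x : vnorm x <= 1 + vnorm x ^ 5 /\ vnorm x ^ 3 <= 1 + vnorm x ^ 5.
Proof.
split; [rewrite <- (pow_1 (vnorm x)) at 1|];
  apply pow_le_1_add_pow; auto using vnorm_nonneg.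
Qed.

Lemma cubic_flow_consistency_vnorm t t0 x : 0 < t < t0 ->
  Rabs ((cubic_flow t (fst x) - fst x) / t - (fst x - fst x ^ 3))
    <= t * (16 + 16 * exp t0) * (1 + vnorm x ^ 5).
Proof.
intros Ht; eapply Rle_trans; [apply cubic_flow_consistency, Ht|].
assert (Het : exp t <= exp t0) by (apply exp_le_compat; lra).
assert (Hu : Rabs (fst x) ^ 5 <= vnorm x ^ 5)
  by (apply pow_incr; split; [apply Rabs_pos|apply Rabs_fst_le_vnorm]).
assert (0 <= Rabs (fst x) ^ 5) by (apply pow_le, Rabs_pos).
apply Rmult_le_compat; try lra; generalize (exp_pos t); nra.
Qed.

Lemma vnorm_phiNL_le beta t t0 x : 0 < t < t0 ->
  vnorm (phiNL beta t x) <= (exp t0 + 1 + Rabs beta * t0) * (1 + vnorm x ^ 5).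
Proof.
intros Ht; rewrite phiNL_eq.
destruct (vnorm_le_1_add_pow5 x) as [Hn _].
assert (Hn0 := vnorm_nonneg x); assert (Hz : 0 <= vnorm x ^ 5) by (apply pow_le; lra).
assert (Hp := Rabs_cubic_flow_le t (fst x) (Rlt_le _ _ (proj1 Ht))).
assert (Hu := Rabs_fst_le_vnorm x); assert (Hv := Rabs_snd_le_vnorm x).
assert (Het : exp t <= exp t0) by (apply exp_le_compat; lra).
assert (Hep := exp_pos t).
eapply Rle_trans; [apply vnorm_le_Rabs_add|]; simpl.
assert (Rabs (snd x + beta * t) <= vnorm x + Rabs beta * t0).
{ eapply Rle_trans; [apply Rabs_triang|]; rewrite Rabs_mult, (Rabs_right t) by lra.
  assert (Rabs beta * t <= Rabs beta * t0) by (apply Rmult_le_compat_l; [apply Rabs_pos|lra]).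
  lra. }
assert (exp t * Rabs (fst x) <= exp t0 * vnorm x)
  by (apply Rmult_le_compat; [lra|apply Rabs_pos|lra|lra]).
assert (0 <= Rabs beta * t0) by (apply Rmult_le_pos; [apply Rabs_pos|lra]).
nra.
Qed.

Lemma vnorm_phiNL_sub_le beta t t0 x : 0 < t < t0 ->
  vnorm (vsub (phiNL beta t x) x)
    <= t * (2 + (16 + 16 * exp t0) * t0 + Rabs beta) * (1 + vnorm x ^ 5).
Proof.
intros Ht; rewrite phiNL_eq.
destruct (vnorm_le_1_add_pow5 x) as [Hn Hn3].
assert (Hz : 0 <= vnorm x ^ 5) by (apply pow_le, vnorm_nonneg).
assert (Hc := cubic_flow_consistency_vnorm t t0 x Ht).
set (Z := 1 + vnorm x ^ 5) in *; set (c := 16 + 16 * exp t0) in *.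
assert (HZ : 1 <= Z) by (unfold Z; lra).
assert (Hc0 : 0 <= c) by (unfold c; generalize (exp_pos t0); lra).
assert (Hu3 : Rabs (fst x - fst x ^ 3) <= 2 * Z).
{ eapply Rle_trans; [apply Rabs_triang|]; rewrite Rabs_Ropp, <- RPow_abs.
  assert (Rabs (fst x) ^ 3 <= vnorm x ^ 3)
    by (apply pow_incr; split; [apply Rabs_pos|apply Rabs_fst_le_vnorm]).
  generalize (Rabs_fst_le_vnorm x); lra. }
assert (Hq : Rabs ((cubic_flow t (fst x) - fst x) / t) <= (2 + c * t0) * Z).
{ replace ((cubic_flow t (fst x) - fst x) / t) with
    (((cubic_flow t (fst x) - fst x) / t - (fst x - fst x ^ 3)) + (fst x - fst x ^ 3)) by ring.
  eapply Rle_trans; [apply Rabs_triang|].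
  assert (t * c * Z <= t0 * c * Z) by (apply Rmult_le_compat_r; [lra|]; apply Rmult_le_compat_r; lra).
  lra. }
eapply Rle_trans; [apply vnorm_le_Rabs_add|]; unfold vsub; simpl.
set (q := (cubic_flow t (fst x) - fst x) / t) in Hq.
replace (cubic_flow t (fst x) - fst x) with (t * q) by (unfold q; field; lra).
replace (snd x + beta * t - snd x) with (t * beta) by ring.
rewrite !Rabs_mult, (Rabs_right t) by lra.
assert (t * Rabs q <= t * ((2 + c * t0) * Z)) by (apply Rmult_le_compat_l; lra).
assert (t * Rabs beta <= t * Rabs beta * Z)
  by (rewrite <- (Rmult_1_r (t * Rabs beta)) at 1; apply Rmult_le_compat_l;
      [apply Rmult_le_pos; [lra|apply Rabs_pos]|unfold Z; lra]).
nra.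
Qed.

Lemma psi_tau_sub_Ffield g1 g2 beta t x : t <> 0 ->
  vsub (psi_tau g1 g2 beta t x) (Ffield g1 g2 beta x)
  = vadd (vadd (mapply (msub (mexp_quot t (Bmat g1 g2)) (Bmat g1 g2)) (phiNL beta t x))
               (mapply (Bmat g1 g2) (vsub (phiNL beta t x) x)))
         ((cubic_flow t (fst x) - fst x) / t - (fst x - fst x ^ 3), 0).
Proof.
intros Ht; rewrite psi_tau_decomp, phiNL_eq.
destruct (mexp_quot t (Bmat g1 g2)) as [a b c d]; destruct x.
unfold vadd, vscal, vsub, mapply, msub, Ffield, Bmat; simpl; f_equal; field; exact Ht.
Qed.

Lemma psi_tau_consistency g1 g2 beta t0 : 0 < t0 -> exists C, 0 < C /\
  forall t, 0 < t < t0 -> forall x,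
  vnorm (vsub (psi_tau g1 g2 beta t x) (Ffield g1 g2 beta x)) <= C * t * (1 + vnorm x ^ 5).
Proof.
intros Ht0; destruct (mexp_quot_sub_bound (Bmat g1 g2) t0) as [K [HK HKt]].
set (L := mnorm1 (Bmat g1 g2)); assert (HL : 0 <= L) by apply mnorm1_nonneg.
set (c := 16 + 16 * exp t0); assert (Hc : 0 <= c) by (unfold c; generalize (exp_pos t0); lra).
set (CN := exp t0 + 1 + Rabs beta * t0).
set (CS := 2 + c * t0 + Rabs beta).
assert (HCN : 0 <= CN) by (unfold CN; generalize (exp_pos t0) (Rabs_pos beta); nra).
assert (HCS : 0 <= CS) by (unfold CS; generalize (Rabs_pos beta); nra).
exists (K * CN + L * CS + c + 1); split; [nra|].
intros t Ht x.
assert (Hz : 0 <= vnorm x ^ 5) by (apply pow_le, vnorm_nonneg).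
set (Z := 1 + vnorm x ^ 5) in *.
assert (HtZ : 0 <= t * Z) by (unfold Z; nra).
assert (HN := vnorm_phiNL_le beta t t0 x Ht).
assert (HS := vnorm_phiNL_sub_le beta t t0 x Ht).
assert (Hh := cubic_flow_consistency_vnorm t t0 x Ht).
fold c Z CN in HN; fold c Z CS in HS; fold c Z in Hh.
rewrite psi_tau_sub_Ffield by lra.
assert (H1 : vnorm (mapply (msub (mexp_quot t (Bmat g1 g2)) (Bmat g1 g2)) (phiNL beta t x))
             <= K * CN * (t * Z)).
{ eapply Rle_trans; [apply vnorm_mapply_le|].
  replace (K * CN * (t * Z)) with ((K * t) * (CN * Z)) by ring.
  apply Rmult_le_compat; [apply mnorm1_nonneg|apply vnorm_nonneg|apply HKt, Ht|exact HN]. }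
assert (H2 : vnorm (mapply (Bmat g1 g2) (vsub (phiNL beta t x) x)) <= L * CS * (t * Z)).
{ eapply Rle_trans; [apply vnorm_mapply_le|]; fold L.
  replace (L * CS * (t * Z)) with (L * (t * CS * Z)) by ring.
  apply Rmult_le_compat_l; [exact HL|exact HS]. }
assert (H3 : vnorm ((cubic_flow t (fst x) - fst x) / t - (fst x - fst x ^ 3), 0) <= c * (t * Z)).
{ eapply Rle_trans; [apply vnorm_fst_only_le|]; lra. }
eapply Rle_trans; [apply vnorm_vadd_le|].
eapply Rle_trans; [apply Rplus_le_compat; [apply vnorm_vadd_le|apply Rle_refl]|].
nra.
Qed.

Lemma vnorm_zero : vnorm (0, 0) = 0.
Proof. unfold vnorm, inner; simpl; rewrite Rmult_0_l, Rplus_0_l; apply sqrt_0. Qed.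

Lemma vnorm_Ffield_zero_le g1 g2 beta : vnorm (Ffield g1 g2 beta (0, 0)) <= Rabs beta.
Proof.
eapply Rle_trans; [apply vnorm_le_Rabs_add|]; unfold Ffield; simpl.
replace (0 - 0 * (0 * (0 * 1)) - 0) with 0 by ring.
replace (g1 * 0 - g2 * 0 + beta) with beta by ring.
rewrite Rabs_R0; lra.
Qed.

Theorem mainTheorem4 (g1 g2 beta tau0 : R) (Htau0 : 0 < tau0) :
  (exists C : R, 0 < C /\
    forall tau : R, 0 < tau < tau0 ->
    forall x1 x2 x : vec,
      inner (vsub x2 x1) (vsub (psi_tau g1 g2 beta tau x2) (psi_tau g1 g2 beta tau x1))
        <= C * vnorm (vsub x2 x1) ^ 2
      /\ vnorm (vsub (psi_tau g1 g2 beta tau x2) (psi_tau g1 g2 beta tau x1))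
        <= C * (1 + vnorm x1 ^ 3 + vnorm x2 ^ 3) * vnorm (vsub x2 x1)
      /\ vnorm (vsub (psi_tau g1 g2 beta tau x) (Ffield g1 g2 beta x))
        <= C * tau * (1 + vnorm x ^ 5))
  /\ (exists M : R, forall tau : R, 0 < tau < tau0 ->
        vnorm (psi_tau g1 g2 beta tau (0, 0)) <= M).
Proof.
destruct (psi_tau_one_sided_lipschitz g1 g2 beta tau0 Htau0) as [C1 [HC1 H1]].
destruct (psi_tau_local_lipschitz g1 g2 beta tau0 Htau0) as [C2 [HC2 H2]].
destruct (psi_tau_consistency g1 g2 beta tau0 Htau0) as [C3 [HC3 H3]].
split.
- exists (C1 + C2 + C3); split; [lra|]; intros t Ht x1 x2 x.
  assert (Hw : forall Ci X Y, 0 <= Ci <= C1 + C2 + C3 -> 0 <= X * Y ->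
                 Ci * X * Y <= (C1 + C2 + C3) * X * Y)
    by (intros; rewrite !Rmult_assoc; apply Rmult_le_compat_r; lra).
  assert (0 <= vnorm x1 ^ 3) by (apply pow_le, vnorm_nonneg).
  assert (0 <= vnorm x2 ^ 3) by (apply pow_le, vnorm_nonneg).
  assert (0 <= vnorm x ^ 5) by (apply pow_le, vnorm_nonneg).
  assert (Hd := vnorm_nonneg (vsub x2 x1)).
  split; [|split].
  + eapply Rle_trans; [apply H1, Ht|].
    apply Rmult_le_compat_r; [apply pow2_ge_0|lra].
  + eapply Rle_trans; [apply H2, Ht|].
    apply Hw; [lra|apply Rmult_le_pos; lra].
  + eapply Rle_trans; [apply H3, Ht|].
    apply Hw; [lra|apply Rmult_le_pos; lra].
- exists (C3 * tau0 + Rabs beta); intros t Ht.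
  eapply Rle_trans; [apply (vnorm_le_vsub_add _ (Ffield g1 g2 beta (0, 0)))|].
  assert (Hd := H3 t Ht (0, 0)); rewrite vnorm_zero in Hd.
  assert (C3 * t <= C3 * tau0) by (apply Rmult_le_compat_l; lra).
  generalize (vnorm_Ffield_zero_le g1 g2 beta); simpl in Hd; lra.
Qed.
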